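(* Let $n\ge2$, $\delta>0$, $d_0>0$, and $f,g:\mathbb{R}^3\to\mathbb{R}$ sufficiently smooth. Consider the $n$-patch model with identical diffusion rates, for $j\in\Omega=\{1,\dots,n\}$, $$\dot u_j=\delta d_0\sum_{i\in\Omega}(u_i-u_j)+f(u_j,v_j,\alpha),\qquad \dot v_j=\delta d_0\sum_{i\in\Omega}(v_i-v_j)+g(u_j,v_j,\alpha)$$ (i.e. the model with $\delta\sum_i(d_{11}(u_i-u_j)+d_{12}(v_i-v_j))$ and $\delta\sum_i(d_{21}(u_i-u_j)+d_{22}(v_i-v_j))$ where $d_{11}=d_{22}=d_0$, $d_{12}=d_{21}=0$). Suppose the kinetic system $\dot u=f(u,v,\alpha_0)$, $\dot v=g(u,v,\alpha_0)$ has a stable periodic solution $\psi(t)=(u_0(t),v_0(t))$ with minimum period $p>0$ whose Floquet multipliers are $\gamma=1$ and $\tilde\gamma\in(0,1)$. Then, with $\alpha=\alpha_0$, for sufficiently small $\delta>0$ the synchronous periodic solution $(\psi(t),\dots,\psi(t))^T$ is stable with respect to the patch model. *)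

From HB Require Import structures.
From mathcomp Require Import all_boot all_order all_algebra.
From mathcomp Require Import all_classical all_reals all_analysis.
From mathcomp Require complex.
Import complex.ComplexField.
Set Implicit Arguments. Unset Strict Implicit. Unset Printing Implicit Defensive.
Import Order.TTheory GRing.Theory Num.Theory.
Import numFieldNormedType.Exports.
Local Open Scope ring_scope.

Section Defs.
Variable R : realType.

Definition jac (m : nat) (F : 'rV[R]_m -> 'rV[R]_m) (x : 'rV[R]_m) : 'M[R]_m :=
  \matrix_(i < m, j < m) derive1 (fun h : R => F (x + h *: delta_mx 0 j) 0 i) 0.

Definition C1_field (m : nat) (F : 'rV[R]_m -> 'rV[R]_m) : Prop :=
  (forall x i j, derivable (fun h : R => F (x + h *: delta_mx 0 j) 0 i) 0 1) /\
  (forall i j, continuous (fun x => jac F x i j)).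

Definition is_solution (m : nat) (F : 'rV[R]_m -> 'rV[R]_m) (x : R -> 'rV[R]_m) :=
  forall t : R, is_derive t 1 x (F (x t)).

Definition min_periodic (m : nat) (x : R -> 'rV[R]_m) (p : R) : Prop :=
  0 < p /\ (forall t, x (t + p) = x t) /\
  (forall q, 0 < q -> q < p -> exists t, x (t + q) <> x t).

Definition principal_fundamental (m : nat) (F : 'rV[R]_m -> 'rV[R]_m)
    (x : R -> 'rV[R]_m) (Phi : R -> 'M[R]_m) : Prop :=
  Phi 0 = 1%:M /\ forall t : R, is_derive t 1 Phi (jac F (x t) *m Phi t).

(* The Floquet multipliers of the periodic solution x (period p) are the
   eigenvalues (with algebraic multiplicity) of the monodromy matrix Phi(p),
   i.e. the roots of its characteristic polynomial. *)
Definition floquet_charpoly (m : nat) (F : 'rV[R]_m -> 'rV[R]_m)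
    (x : R -> 'rV[R]_m) (p : R) (P : {poly R}) : Prop :=
  exists Phi, principal_fundamental F x Phi /\ char_poly (Phi p) = P.

(* Stability of a periodic solution (Floquet / Andronov-Witt criterion):
   x is a p-periodic solution (minimal period p), and its Floquet multipliers
   are 1 (simple) and others of modulus < 1. *)
Definition floquet_stable (m : nat) (F : 'rV[R]_m -> 'rV[R]_m)
    (x : R -> 'rV[R]_m) (p : R) : Prop :=
  is_solution F x /\ min_periodic x p /\
  exists Q : {poly R}, floquet_charpoly F x p (('X - 1%:P) * Q) /\
    forall z : complex.complex R,
      root (map_poly (complex.real_complex R) Q) z -> `|z| < 1.

Definition kinetic (f g : R -> R -> R -> R) (a : R) (x : 'rV[R]_2) : 'rV[R]_2 :=
  \row_(k < 2) (if k == 0 then f (x 0 0) (x 0 1) a else g (x 0 0) (x 0 1) a).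

Definition pair_fun (u v : R -> R) (t : R) : 'rV[R]_2 :=
  \row_(k < 2) (if k == 0 then u t else v t).

(* n-patch model; state (u_1..u_n, v_1..v_n) in R^(n+n):
   u_j' = delta sum_i (d11 (u_i - u_j) + d12 (v_i - v_j)) + f(u_j, v_j, a)
   v_j' = delta sum_i (d21 (u_i - u_j) + d22 (v_i - v_j)) + g(u_j, v_j, a). *)
Definition patch_field (n : nat) (delta d11 d12 d21 d22 : R)
    (f g : R -> R -> R -> R) (a : R) (x : 'rV[R]_(n + n)) : 'rV[R]_(n + n) :=
  let u j := x 0 (lshift n j) in
  let v j := x 0 (rshift n j) in
  row_mx
    (\row_(j < n) (delta * \sum_(i < n) (d11 * (u i - u j) + d12 * (v i - v j))
                   + f (u j) (v j) a))
    (\row_(j < n) (delta * \sum_(i < n) (d21 * (u i - u j) + d22 * (v i - v j))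
                   + g (u j) (v j) a)).

Definition sync_fun (n : nat) (u v : R -> R) (t : R) : 'rV[R]_(n + n) :=
  row_mx (\row_(j < n) u t) (\row_(j < n) v t).

End Defs.

From HB Require Import structures.
From mathcomp Require Import all_boot all_order all_algebra.
From mathcomp Require Import all_classical all_reals all_analysis.
From mathcomp Require complex.
Import complex.ComplexField.
Import Order.TTheory GRing.Theory Num.Theory.
Import numFieldNormedType.Exports.
From mathcomp Require Import ring.
Set Implicit Arguments. Unset Strict Implicit. Unset Printing Implicit Defensive.
Local Open Scope ring_scope.

(* With identical diffusion rates, the Jacobian of the patch model along the
   synchronous solution is [I_2 (x) delta d0 (J - n I) + A(t) (x) I_n], where [J]
   is the all-ones matrix and [A(t)] the Jacobian of the kinetics along [psi].
   The two summands commute, so the principal fundamental matrix is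
   [Phi(t) (x) exp(t delta d0 (J - n I))], and
   [exp(t delta d0 (J - n I)) = e(t) I + (1 - e(t)) J / n] with
   [e(t) = exp(-n delta d0 t)] has eigenvalues 1 (simple) and [e(t)].
   Eigenvalues of a Kronecker product are the pairwise products, so the Floquet
   multipliers of the synchronous solution are 1 and [gamma], each once, and
   [e(p)], [gamma e(p)], each [n - 1] times: all but the trivial one lie in
   (0, 1), whatever [delta > 0]. *)

Section Kronecker.
Variables (F : comNzRingType) (n : nat).

Definition blk_of (r : 'I_(n + n)) : 'I_2 := if fintype.split r is inl _ then 0 else 1.
Definition pos_of (r : 'I_(n + n)) : 'I_n := match fintype.split r with inl j | inr j => j end.

Lemma blk_of_lshift j : blk_of (lshift n j) = 0.
Proof. by rewrite /blk_of -[lshift n j]/(unsplit (inl j)) unsplitK. Qed.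
Lemma blk_of_rshift j : blk_of (rshift n j) = 1.
Proof. by rewrite /blk_of -[rshift n j]/(unsplit (inr j)) unsplitK. Qed.
Lemma pos_of_lshift j : pos_of (lshift n j) = j.
Proof. by rewrite /pos_of -[lshift n j]/(unsplit (inl j)) unsplitK. Qed.
Lemma pos_of_rshift j : pos_of (rshift n j) = j.
Proof. by rewrite /pos_of -[rshift n j]/(unsplit (inr j)) unsplitK. Qed.

Definition kron_ofE := (blk_of_lshift, blk_of_rshift, pos_of_lshift, pos_of_rshift).

(* [B (x) C], where index [lshift n j] (resp. [rshift n j]) stands for the pair
   (0, j) (resp. (1, j)), as in the [row_mx] layout of [patch_field]. *)
Definition kron (B : 'M[F]_2) (C : 'M[F]_n) : 'M[F]_(n + n) :=
  \matrix_(r, s) (B (blk_of r) (blk_of s) * C (pos_of r) (pos_of s)).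

Lemma mulmx_kron B C B' C' : kron B C *m kron B' C' = kron (B *m B') (C *m C').
Proof.
apply/matrixP => r s; rewrite !mxE big_split_ord /=.
under eq_bigr do rewrite !mxE !kron_ofE.
under [X in _ + X]eq_bigr do rewrite !mxE !kron_ofE.
rewrite !big_ord_recr big_ord0 /= add0r mulrDl !big_distrr /=.
congr (_ + _); apply: eq_bigr => j _;
  by rewrite mulrACA; congr (B _ _ * B' _ _ * _); apply: val_inj.
Qed.

Lemma kron1 : kron 1%:M 1%:M = 1%:M.
Proof.
apply/matrixP => r s; rewrite !mxE.
case: (split_ordP r) => j ->; case: (split_ordP s) => k ->;
  by rewrite !kron_ofE ?eq_lshift ?eq_rshift ?eq_lrshift ?eq_rlshift ?mul0r ?mul1r.
Qed.

Lemma kron_trig B C : is_trig_mx B -> is_trig_mx C -> is_trig_mx (kron B C).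
Proof.
move=> /is_trig_mxP trigB /is_trig_mxP trigC; apply/is_trig_mxP => r s.
rewrite mxE; case: (split_ordP r) => j ->; case: (split_ordP s) => k ->;
  rewrite !kron_ofE /= => lt_rs.
- by rewrite trigC ?mulr0.
- by rewrite trigB ?mul0r.
- by move: lt_rs; rewrite ltnNge (leq_trans (ltnW (ltn_ord k))) ?leq_addr.
- by rewrite trigC ?mulr0 // -(ltn_add2l n).
Qed.

Lemma char_poly_kron_trig B C : is_trig_mx B -> is_trig_mx C ->
  char_poly (kron B C) =
  \prod_(r < n + n) ('X - (B (blk_of r) (blk_of r) * C (pos_of r) (pos_of r))%:P).
Proof.
by move=> trigB trigC; rewrite char_poly_trig ?kron_trig //; under eq_bigr do rewrite mxE.
Qed.

End Kronecker.

Lemma kron_unitmx (F : comUnitRingType) n (B : 'M[F]_2) (C : 'M[F]_n) :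
  B \in unitmx -> C \in unitmx -> kron B C \in unitmx.
Proof.
move=> unitB unitC; have := @mulmx1_unit _ _ (kron B C) (kron (invmx B) (invmx C)).
by rewrite mulmx_kron !mulmxV // kron1 => /(_ erefl) [].
Qed.

Lemma char_poly_simmx (F : fieldType) n (S A B : 'M[F]_n) :
  S \in unitmx -> S *m A = B *m S -> char_poly A = char_poly B.
Proof.
move=> unitS SA_BS.
have SAX_BXS : char_poly_mx B *m map_mx polyC S = map_mx polyC S *m char_poly_mx A.
  rewrite /char_poly_mx mulmxBl mulmxBr -!map_mxM -SA_BS.
  by rewrite mul_scalar_mx mul_mx_scalar.
have detS_neq0 : (\det S)%:P != 0 by rewrite polyC_eq0 -unitfE -unitmxE.
apply: (mulfI detS_neq0); rewrite /char_poly.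
by have := congr1 determinant SAX_BXS; rewrite !det_mulmx det_map_mx mulrC => ->.
Qed.

Lemma char_poly_kron_simmx (F : fieldType) n (B L S : 'M[F]_2) (C K T : 'M[F]_n) :
  S \in unitmx -> S *m B = L *m S -> is_trig_mx L ->
  T \in unitmx -> T *m C = K *m T -> is_trig_mx K ->
  char_poly (kron B C) =
  \prod_(r < n + n) ('X - (L (blk_of r) (blk_of r) * K (pos_of r) (pos_of r))%:P).
Proof.
move=> unitS SB_LS trigL unitT TC_KT trigK; rewrite -char_poly_kron_trig //.
by apply: (char_poly_simmx (kron_unitmx unitS unitT)); rewrite !mulmx_kron SB_LS TC_KT.
Qed.

Lemma det_mx2 (F : comNzRingType) (A : 'M[F]_2) :
  \det A = A 0 0 * A 1 1 - A 0 1 * A 1 0.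
Proof.
rewrite (expand_det_row _ 0) !big_ord_recl big_ord0 addr0 /cofactor !det_mx11 !mxE /=.
have -> : lift 0 0 = 1 :> 'I_2 by apply: val_inj.
have -> : lift 1 0 = 0 :> 'I_2 by apply: val_inj.
have -> : ord0 = 0 :> 'I_2 by apply: val_inj.
by rewrite /bump /= expr0 expr1 mul1r mulN1r mulrN.
Qed.

Lemma ord2P (i : 'I_2) : i = 0 \/ i = 1.
Proof. by case: i => [[|[|//]] lti]; [left | right]; apply: val_inj. Qed.

Lemma trigonalize_mx2 (F : fieldType) (P : 'M[F]_2) (a b : F) :
  char_poly P = ('X - a%:P) * ('X - b%:P) ->
  exists S L, [/\ S \in unitmx, S *m P = L *m S, is_trig_mx L, L 0 0 = a & L 1 1 = b].
Proof.
move=> charP.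
have : eigenvalue P a by rewrite eigenvalue_root_char charP rootM root_XsubC eqxx.
case/eigenvalueP => v vP v_neq0.
(* the rows of [S]: the eigenvector [v] and a unit vector completing it to a basis *)
pose S : 'M[F]_2 := \matrix_(i, j)
  if i == 0 then v 0 j else if v 0 0 == 0 then (j == 0)%:R else (j == 1)%:R.
have unitS : S \in unitmx.
  rewrite unitmxE unitfE det_mx2 !mxE /=.
  have [v00|] := eqVneq (v 0 0) 0; last by rewrite mulr1 mulr0 subr0.
  rewrite v00 mul0r mulr1 sub0r oppr_eq0; apply: contra v_neq0 => /eqP v01.
  by apply/eqP/rowP => j; case: (ord2P j) => ->; rewrite !mxE.
pose L := S *m P *m invmx S.
have SP_LS : S *m P = L *m S by rewrite /L mulmxKV.
have rowL0 : row 0 L = a *: row 0 1%:M.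
  have rowS0 : row 0 S = v by apply/rowP => j; rewrite !mxE.
  by rewrite /L !row_mul rowS0 vP -scalemxAl -rowS0 -row_mul mulmxV.
have L0 j : L 0 j = a * (0 == j)%:R.
  by have := congr1 (fun w : 'rV_2 => w 0 j) rowL0; rewrite !mxE.
have trigL : is_trig_mx L.
  apply/is_trig_mxP => i j; case: (ord2P i) => ->; case: (ord2P j) => -> //= _.
  by rewrite L0 mulr0.
exists S, L; split => //; first by rewrite L0 mulr1.
have := char_poly_simmx unitS SP_LS.
rewrite charP char_poly_trig // !big_ord_recr big_ord0 /= mul1r.
have -> : widen_ord (leqnSn 1) ord_max = 0 :> 'I_2 by apply: val_inj.
have -> : ord_max = 1 :> 'I_2 by apply: val_inj.
rewrite L0 mulr1 => /(mulfI (negbT (polyXsubC_eq0 _))) /(congr1 (root^~ b)).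
by rewrite !root_XsubC eqxx => /esym /eqP.
Qed.

Lemma sumr_delta_l (F : nzRingType) m (i : 'I_m) (x : 'I_m -> F) :
  \sum_(l < m) (l == i)%:R * x l = x i.
Proof.
rewrite (bigD1 i) //= eqxx mul1r big1 ?addr0 // => l /negbTE ->.
by rewrite mul0r.
Qed.

Lemma sumr_delta_r (F : nzRingType) m (i : 'I_m) (x : 'I_m -> F) :
  \sum_(l < m) (i == l)%:R * x l = x i.
Proof. by under eq_bigr do rewrite eq_sym; exact: sumr_delta_l. Qed.

Definition mixing_mx (F : fieldType) n (e : F) : 'M[F]_n :=
  \matrix_(j, k) (e * (j == k)%:R + (1 - e) / n%:R).

Lemma trigonalize_mixing_mx (F : numFieldType) n (e : F) :
  exists S L, [/\ S \in unitmx, S *m mixing_mx n.+1 e = L *m S, is_trig_mx L,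
    L 0 0 = 1 & forall j, L (lift 0 j) (lift 0 j) = e].
Proof.
(* first basis vector: the all-ones row, a left eigenvector for the eigenvalue 1 *)
pose S : 'M[F]_n.+1 := \matrix_(i, k) (if i == 0 then 1 else (i == k)%:R).
pose L : 'M[F]_n.+1 := \matrix_(i, k) if i == 0 then (k == 0)%:R
  else (k == 0)%:R * ((1 - e) / n.+1%:R) + (i == k)%:R * e.
have lt_neq0 (i k : 'I_n.+1) : (i < k)%N -> (k == 0) = false.
  by move=> lt_ik; apply/negbTE; rewrite -val_eqE /= -lt0n (leq_ltn_trans _ lt_ik).
exists S, L; split.
- rewrite unitmxE unitfE -det_tr det_trig.
    by rewrite big1 ?oner_eq0 // => i _; rewrite !mxE eqxx; case: ifP.
  apply/is_trig_mxP => i k lt_ik; rewrite !mxE (lt_neq0 _ _ lt_ik).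
  by rewrite -val_eqE /= gtn_eqF.
- apply/matrixP => i k; rewrite !mxE.
  have [-> | i_neq0] := eqVneq i 0.
    under eq_bigr do rewrite !mxE eqxx mul1r.
    rewrite [RHS](bigD1 0) //= !mxE eqxx mul1r [X in _ = _ + X]big1; last first.
      by move=> l /negbTE l_neq0; rewrite !mxE l_neq0 mul0r.
    rewrite addr0 big_split /= sumr_const card_ord.
    under eq_bigr do rewrite mulrC.
    by rewrite (sumr_delta_l k (fun=> e)) -[(1 - e) / _ *+ _]mulr_natr mulfVK // addrC subrK.
  under eq_bigr do rewrite !mxE (negbTE i_neq0).
  rewrite sumr_delta_r.
  under eq_bigr do rewrite !mxE (negbTE i_neq0) mulrDl -!mulrA.
  rewrite big_split /= sumr_delta_l sumr_delta_r (negbTE i_neq0) (eqxx (0 : 'I_n.+1)).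
  by ring.
- apply/is_trig_mxP => i k lt_ik.
  have /negbTE i_neq_k : i != k by rewrite -val_eqE /= ltn_eqF.
  by rewrite !mxE (lt_neq0 _ _ lt_ik) i_neq_k !mul0r addr0 if_same.
- by rewrite /L !mxE.
- move=> j; have /negbTE lift_neq0 : lift 0 j != 0 by rewrite eq_sym neq_lift.
  by rewrite /L !mxE lift_neq0 eqxx mul0r add0r mul1r.
Qed.

Lemma char_poly_kron_mixing (F : numFieldType) n (P : 'M[F]_2) (a b e : F) :
  char_poly P = ('X - a%:P) * ('X - b%:P) ->
  char_poly (kron P (mixing_mx n.+1 e)) =
  ('X - a%:P) * ('X - (a * e)%:P) ^+ n * (('X - b%:P) * ('X - (b * e)%:P) ^+ n).
Proof.
move=> charP.
have [S [L [unitS SP_LS trigL L00 L11]]] := trigonalize_mx2 charP.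
have [T [K [unitT TM_KT trigK K00 Kjj]]] := trigonalize_mixing_mx n e.
rewrite (char_poly_kron_simmx unitS SP_LS trigL unitT TM_KT trigK) big_split_ord /=.
rewrite !big_ord_recl !kron_ofE L00 L11 K00 !mulr1 mulrA.
under eq_bigr do rewrite !kron_ofE L00 Kjj.
under [in X in _ * X]eq_bigr do rewrite !kron_ofE L11 Kjj.
by rewrite !prodr_const !card_ord mulrA.
Qed.

Lemma is_derive_mxP (R : realType) m k (M : R -> 'M[R]_(m, k)) (D : 'M[R]_(m, k)) (t : R) :
  is_derive t (1 : R) M D <-> forall i j, is_derive t (1 : R) (fun x => M x i j) (D i j).
Proof.
split=> [MD i j | MD].
  have := @derive_val _ _ _ _ _ _ _ MD; have := @ex_derive _ _ _ _ _ _ _ MD.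
  move=> /derivable_mxP dM DM; apply: DeriveDef; first exact: dM.
  by rewrite -DM derive_mx // mxE.
have dM : derivable M t 1 by apply/derivable_mxP => i j; case: (MD i j).
by apply: DeriveDef => //; rewrite derive_mx //; apply/matrixP => i j; rewrite mxE derive_val.
Qed.

Lemma is_derive_mull (R : realType) (c x : R) : is_derive x (1 : R) (fun y : R => c * y) c.
Proof.
apply: is_derive_eq (is_deriveZ c (is_derive_id x (1 : R))) _.
by rewrite /GRing.scale /= mulr1.
Qed.

Lemma derive1_linear_add (R : realType) (K : R) (G : R -> R) :
  derivable G 0 (1 : R) -> derive1 (fun h => K * h + G h) 0 = K + derive1 G 0.
Proof.
move=> dG; have KG : is_derive (0 : R) 1 (fun h => K * h + G h) (K + 'D_1 G 0).
  exact: is_deriveD (is_derive_mull K 0) (derivableP dG).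
by rewrite derive1E (@derive_val _ _ _ _ _ _ _ KG) derive1E.
Qed.

Section PatchModel.
Variables (R : realType) (n : nat) (d0 delta a : R) (f g : R -> R -> R -> R) (u0 v0 : R -> R).
Local Notation kin := (kinetic f g a).
Local Notation patch := (patch_field delta d0 0 0 d0 f g a).
Local Notation psi := (pair_fun u0 v0).
Local Notation sync := (sync_fun n u0 v0).

Lemma sync_funE t r : sync t 0 r = psi t 0 (blk_of r).
Proof.
by case: (split_ordP r) => j ->; rewrite /sync_fun ?row_mxEl ?row_mxEr !kron_ofE !mxE.
Qed.

Lemma patch_field_sync t r : patch (sync t) 0 r = kin (psi t) 0 (blk_of r).
Proof.
have := sync_funE t; move: (sync t) => x xE.
case: (split_ordP r) => j ->; rewrite /patch_field ?row_mxEl ?row_mxEr !kron_ofE !mxE /=.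
all: rewrite big1 => [|i _]; rewrite !xE !kron_ofE ?subrr ?mulr0 ?add0r ?addr0 //.
all: by rewrite !mxE.
Qed.

Lemma sync_is_solution : is_solution kin psi -> is_solution patch sync.
Proof.
move=> psi_sol t; apply/is_derive_mxP => i r; rewrite (ord1 i) patch_field_sync.
have -> : (fun x => sync x 0 r) = (fun x => psi x 0 (blk_of r)).
  by apply/funext => x; rewrite sync_funE.
exact: (is_derive_mxP _ _ _).1 (psi_sol t) 0 (blk_of r).
Qed.

Lemma sync_min_periodic p : (0 < n)%N -> min_periodic psi p -> min_periodic sync p.
Proof.
move=> n_gt0 [p_gt0 [psi_p psi_min]]; split=> //; split.
  by move=> t; apply/rowP => r; rewrite !sync_funE psi_p.
move=> q q_gt0 lt_qp; have [t psi_neq] := psi_min q q_gt0 lt_qp.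
exists t => sync_eq; apply: psi_neq; apply/rowP => c.
pose j0 : 'I_n := Ordinal n_gt0.
case: (ord2P c) => ->; [move: (congr1 (fun x : 'rV[R]_(n + n) => x 0 (lshift n j0)) sync_eq)
                         | move: (congr1 (fun x : 'rV[R]_(n + n) => x 0 (rshift n j0)) sync_eq)].
all: by rewrite /= !sync_funE kron_ofE.
Qed.

Definition diffusion_mx : 'M[R]_n := \matrix_(j, k) (delta * d0 * (1 - n%:R * (j == k)%:R)).

Lemma patch_field_sync_shift t r s h :
  patch (sync t + h *: delta_mx 0 s) 0 r =
  kron 1%:M diffusion_mx r s * h +
  (if pos_of r == pos_of s then kin (psi t + h *: delta_mx 0 (blk_of s)) 0 (blk_of r)
   else kin (psi t) 0 (blk_of r)).
Proof.
have sum_shift (u b : R) (k : 'I_n) :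
    \sum_(i < n) d0 * (u + h * (i == k)%:R - (u + h * b)) = d0 * h * (1 - n%:R * b).
  rewrite (eq_bigr (fun i => (i == k)%:R * (d0 * h) - d0 * h * b)).
    by rewrite big_split /= sumr_delta_l sumrN sumr_const card_ord -mulr_natr; ring.
  by move=> i _; ring.
have := sync_funE t; move: (sync t) => x xE.
case: (split_ordP r) => j ->; case: (split_ordP s) => k ->.
all: rewrite /patch_field ?row_mxEl ?row_mxEr !kron_ofE !mxE /=.
all: under eq_bigr do rewrite !mxE !xE !kron_ofE ?eq_lshift ?eq_rshift ?eq_lrshift ?eq_rlshift.
all: rewrite !xE !kron_ofE ?eq_lshift ?eq_rshift ?eq_lrshift ?eq_rlshift.
all: rewrite !mxE /= ?eqxx ?andTb.
all: under eq_bigr do rewrite ?mul0r ?addr0 ?add0r ?subrr ?mulr0.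
all: rewrite ?sum_shift ?big1_eq.
all: have [jk | /negbTE ne_jk] := eqVneq j k; [subst k |].
all: by rewrite ?eqxx ?ne_jk ?mulr1 ?mulr0 ?addr0 ?subr0 ?mul0r; ring.
Qed.

Lemma jac_patch_field_sync t : C1_field kin ->
  jac patch (sync t) = kron 1%:M diffusion_mx + kron (jac kin (psi t)) 1%:M.
Proof.
move=> [kin_derivable _]; apply/matrixP => r s; rewrite /jac [LHS]mxE.
rewrite (funext (patch_field_sync_shift t r s)).
rewrite derive1_linear_add; last first.
  by case: (pos_of r == pos_of s); [exact: kin_derivable | exact: derivable_cst].
rewrite [in RHS]mxE [kron (jac _ _) _ _ _]mxE [jac _ _ _ _]mxE [1%:M _ _]mxE.
by case: (pos_of r == pos_of s); rewrite ?derive1_cst ?mulr1 ?mulr0.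
Qed.

Definition mixing_flow (t : R) : 'M[R]_n := mixing_mx n (expR (- (n%:R * (delta * d0)) * t)).

Lemma mixing_flow0 : mixing_flow 0 = 1%:M.
Proof. by apply/matrixP => j k; rewrite !mxE mulr0 expR0 subrr mul0r addr0 mul1r. Qed.

Lemma is_derive_mixing_flow t : (0 < n)%N ->
  is_derive t (1 : R) mixing_flow (diffusion_mx *m mixing_flow t).
Proof.
move=> n_gt0; have n_neq0 : n%:R != 0 :> R by rewrite pnatr_eq0 -lt0n.
set c := - (n%:R * (delta * d0)); set e := fun x => expR (c * x).
have de : is_derive t (1 : R) e (e t * c).
  exact: is_derive1_comp (is_derive_expR (c * t)) (is_derive_mull c t).
apply/is_derive_mxP => j k.
have -> : (fun x => mixing_flow x j k) = (fun x => ((j == k)%:R - n%:R^-1) * e x + n%:R^-1).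
  by apply/funext => x; rewrite mxE /e /c; field.
apply: is_derive_eq.
rewrite mxE (eq_bigr (fun l => (l == k)%:R * (delta * d0 * e t) + delta * d0 * (1 - e t) / n%:R
  - (j == l)%:R * (n%:R * (delta * d0) * mixing_flow t l k))); last first.
  by move=> l _; rewrite !mxE /e /c; field.
rewrite !big_split /= sumr_delta_l sumrN sumr_delta_r sumr_const card_ord mxE.
by rewrite -[_ / n%:R *+ n]mulr_natr /e /c /GRing.scale /=; field.
Qed.

Lemma kron_principal_fundamental Phi : (0 < n)%N -> C1_field kin ->
  principal_fundamental kin psi Phi ->
  principal_fundamental patch sync (fun t => kron (Phi t) (mixing_flow t)).
Proof.
move=> n_gt0 kinC1 [Phi0 dPhi]; split; first by rewrite Phi0 mixing_flow0 kron1.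
move=> t; rewrite jac_patch_field_sync // mulmxDl !mulmx_kron !mul1mx.
apply/is_derive_mxP => r s.
have dPhi_rs := (is_derive_mxP _ _ _).1 (dPhi t) (blk_of r) (blk_of s).
have dM_rs := (is_derive_mxP _ _ _).1 (is_derive_mixing_flow t n_gt0) (pos_of r) (pos_of s).
have -> : (fun x => kron (Phi x) (mixing_flow x) r s) =
    (fun x => Phi x (blk_of r) (blk_of s)) * (fun x => mixing_flow x (pos_of r) (pos_of s)).
  by apply/funext => x; rewrite mxE.
apply: is_derive_eq.
by rewrite !mxE /GRing.scale /= mulrC [in X in _ = _ + X]mulrC.
Qed.

End PatchModel.

Lemma norm_real_complex_lt1 (R : rcfType) (x : R) :
  0 <= x < 1 -> `|complex.real_complex R x| < 1.
Proof.
case/andP => x_ge0 x_lt1; rewrite ger0_norm ?complex.ler0c //.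
by rewrite -[1 : complex.complex R]/(complex.real_complex R 1) complex.ltcR.
Qed.

Theorem proposition3p3 (R : realType) (n : nat) (d0 : R)
    (f g : R -> R -> R -> R) (alpha0 : R) (u0 v0 : R -> R) (p gamma : R) :
  (2 <= n)%N -> 0 < d0 ->
  (forall a : R, C1_field (kinetic f g a)) ->
  is_solution (kinetic f g alpha0) (pair_fun u0 v0) ->
  min_periodic (pair_fun u0 v0) p ->
  floquet_stable (kinetic f g alpha0) (pair_fun u0 v0) p ->
  0 < gamma < 1 ->
  floquet_charpoly (kinetic f g alpha0) (pair_fun u0 v0) p
    (('X - 1%:P) * ('X - gamma%:P)) ->
  exists delta1 : R, 0 < delta1 /\
    forall delta : R, 0 < delta -> delta < delta1 ->
      floquet_stable (patch_field delta d0 0 0 d0 f g alpha0)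
        (sync_fun n u0 v0) p.
Proof.
(* The stability hypothesis on psi is redundant given its multipliers 1 and gamma,
   and delta1 = 1 is arbitrary: the conclusion holds for every delta > 0. *)
move=> n_ge2 d0_gt0 kinC1 psi_sol psi_per _ /andP[gamma_gt0 gamma_lt1].
case=> Phi [Phi_fund charPhi]; exists 1; split=> // delta delta_gt0 _.
have p_gt0 : 0 < p by case: psi_per.
case: n n_ge2 => [|[|n]] // _.
set e := expR (- (n.+2%:R * (delta * d0)) * p).
have e01 : 0 <= e < 1.
  by rewrite expR_ge0 expR_lt1 mulNr oppr_lt0 !mulr_gt0 ?ltr0n.
have gamma01 : 0 <= gamma < 1 by rewrite ltW.
have gamma_e01 : 0 <= gamma * e < 1.
  case/andP: e01 => e_ge0 e_lt1; apply/andP; split; first exact: mulr_ge0 (ltW _) _.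
  exact: mulr_ilt1 (ltW _) _ _ _.
split; first exact: sync_is_solution.
split; first exact: sync_min_periodic.
exists (('X - e%:P) ^+ n.+1 * (('X - gamma%:P) * ('X - (gamma * e)%:P) ^+ n.+1)).
split.
  exists (fun t => kron (Phi t) (mixing_flow n.+2 d0 delta t)); split.
    exact: kron_principal_fundamental.
  by rewrite /mixing_flow (char_poly_kron_mixing _ _ charPhi) -/e mul1r !mulrA.
move=> z; rewrite 2!rmorphM !rmorphXn /= !map_polyXsubC !rootM !root_exp_XsubC.
by rewrite !root_XsubC => /or3P[] /eqP ->; exact: norm_real_complex_lt1.
Qed.
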